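(* Let $K_1, K_2, K_3, K_4$ be closed subsets of standard simplices, and let $R_f \subseteq K_1 \times K_2$, $R_g \subseteq K_1 \times K_3$, $R_{g'} \subseteq K_2 \times K_4$, $R_{f'} \subseteq K_3 \times K_4$ be closed relations with $R_{f'} \circ R_g = R_{g'} \circ R_f$ (relational composition). Let $u_4: K_4 \to \mathbb{R}$ be continuous and strictly concave, and define $$u_2(y) = \max\{u_4(w) : (y,w) \in R_{g'}\}, \qquad u_3(z) = \max\{u_4(w) : (z,w) \in R_{f'}\}.$$ Define $f, g, g', f'$ as the unique optimizers $$f(x) = \arg\max_{(x,y) \in R_f} u_2(y),\quad g(x) = \arg\max_{(x,z) \in R_g} u_3(z),\quad g'(y) = \arg\max_{(y,w) \in R_{g'}} u_4(w),\quad f'(z) = \arg\max_{(z,w) \in R_{f'}} u_4(w)$$ (assuming these maxima exist and are attained uniquely, so that these are well-defined maps). Assume that for every $x \in K_1$ the set $W_x = \{w \in K_4 : (x,w) \in R_{f'} \circ R_g\}$ is non-empty and convex. Then $f' \circ g = g' \circ f$.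
   Context: Relational composition: $S \circ R = \{(a,c) : \exists b,\ (a,b) \in R,\ (b,c) \in S\}$. Strict concavity of $u_4$ presupposes that $K_4$ is convex. *)

From HB Require Import structures.
From mathcomp Require Import all_boot all_order all_algebra.
From mathcomp Require Import all_classical all_reals all_analysis.
Set Implicit Arguments. Unset Strict Implicit. Unset Printing Implicit Defensive.
Import Order.TTheory GRing.Theory Num.Theory.
Import numFieldNormedType.Exports.
Local Open Scope classical_set_scope.
Local Open Scope ring_scope.

Definition std_simplex (R : realType) (n : nat) : set 'rV[R]_n :=
  [set x | (forall i, 0 <= x ord0 i) /\ \sum_i x ord0 i = 1].

Definition rcomp (A B C : Type) (S : set (B * C)) (Rel : set (A * B)) : set (A * C) :=
  [set ac | exists b, Rel (ac.1, b) /\ S (b, ac.2)].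

Definition convex_set_rV (R : realType) (n : nat) (A : set 'rV[R]_n) :=
  forall x y (t : R), A x -> A y -> 0 <= t <= 1 -> A (t *: x + (1 - t) *: y).

Definition strictly_concave_on (R : realType) (n : nat) (K : set 'rV[R]_n)
  (u : 'rV[R]_n -> R) :=
  forall x y (t : R), K x -> K y -> x != y -> 0 < t < 1 ->
    t * u x + (1 - t) * u y < u (t *: x + (1 - t) *: y).

Definition is_max_over (A B : Type) (R : realType) (Rel : set (A * B)) (u : B -> R)
  (a : A) (m : R) :=
  (exists b, Rel (a, b) /\ u b = m) /\ (forall b, Rel (a, b) -> u b <= m).

Definition unique_argmax (A B : Type) (R : realType) (Rel : set (A * B)) (u : B -> R)
  (a : A) (b : B) :=
  Rel (a, b) /\ (forall b', Rel (a, b') -> u b' <= u b) /\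
  (forall b', Rel (a, b') -> u b' = u b -> b' = b).

(* Optimising in two stages along either side of the square is the same as
   optimising [u4] directly over the section [W_x] of the common composite
   relation: [f' (g x)] and [g' (f x)] both maximise [u4] on [W_x].  A strictly
   concave function has at most one maximiser on a convex set, so they agree. *)

From HB Require Import structures.
From mathcomp Require Import all_boot all_order all_algebra.
From mathcomp Require Import all_classical all_reals all_analysis.
From mathcomp Require Import lra.
Set Implicit Arguments. Unset Strict Implicit. Unset Printing Implicit Defensive.
Import Order.TTheory GRing.Theory Num.Theory.
Import numFieldNormedType.Exports.
Local Open Scope classical_set_scope.
Local Open Scope ring_scope.

Lemma strictly_concave_argmax_unique (R : realType) (n : nat)
    (K W : set 'rV[R]_n) (u : 'rV[R]_n -> R) (a b : 'rV[R]_n) :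
  W `<=` K -> convex_set_rV W -> strictly_concave_on K u -> W a -> W b ->
  (forall w, W w -> u w <= u a) -> (forall w, W w -> u w <= u b) -> a = b.
Proof.
move=> WK cvxW concu Wa Wb maxa maxb; case: (eqVneq a b) => // neq_ab.
have mid_open : 0 < (2^-1 : R) < 1 by apply/andP; split; lra.
have mid_closed : 0 <= (2^-1 : R) <= 1 by apply/andP; split; lra.
exfalso; have := concu a b 2^-1 (WK _ Wa) (WK _ Wb) neq_ab mid_open.
have := maxa _ (cvxW a b 2^-1 Wa Wb mid_closed).
have := maxa _ Wb; have := maxb _ Wa.
lra.
Qed.

Lemma rcomp_argmax_le (A B C : Type) (R : realType)
    (S : set (B * C)) (T : set (A * B)) (u : C -> R) (v : B -> R)
    (a : A) (b : B) (c : C) :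
  (forall b', T (a, b') -> is_max_over S u b' (v b')) ->
  T (a, b) -> (forall b', T (a, b') -> v b' <= v b) ->
  (forall c', S (b, c') -> u c' <= u c) ->
  forall c', rcomp S T (a, c') -> u c' <= u c.
Proof.
move=> maxv Tab maxb maxc c' [b' [Tab' Sbc']].
have [[c'' [Sbc'' vb]] _] := maxv b Tab.
have [_ ub'] := maxv b' Tab'.
apply: le_trans (ub' _ Sbc') _; apply: le_trans (maxb _ Tab') _.
by rewrite -vb maxc.
Qed.

Theorem mainTheorem13 (R : realType) (n1 n2 n3 n4 : nat)
  (K1 : set 'rV[R]_n1) (K2 : set 'rV[R]_n2) (K3 : set 'rV[R]_n3) (K4 : set 'rV[R]_n4)
  (Rf : set ('rV[R]_n1 * 'rV[R]_n2)) (Rg : set ('rV[R]_n1 * 'rV[R]_n3))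
  (Rg' : set ('rV[R]_n2 * 'rV[R]_n4)) (Rf' : set ('rV[R]_n3 * 'rV[R]_n4))
  (u4 : 'rV[R]_n4 -> R) (u2 : 'rV[R]_n2 -> R) (u3 : 'rV[R]_n3 -> R)
  (f : 'rV[R]_n1 -> 'rV[R]_n2) (g : 'rV[R]_n1 -> 'rV[R]_n3)
  (g' : 'rV[R]_n2 -> 'rV[R]_n4) (f' : 'rV[R]_n3 -> 'rV[R]_n4) :
  closed K1 -> K1 `<=` @std_simplex R n1 ->
  closed K2 -> K2 `<=` @std_simplex R n2 ->
  closed K3 -> K3 `<=` @std_simplex R n3 ->
  closed K4 -> K4 `<=` @std_simplex R n4 ->
  closed Rf -> Rf `<=` K1 `*` K2 ->
  closed Rg -> Rg `<=` K1 `*` K3 ->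
  closed Rg' -> Rg' `<=` K2 `*` K4 ->
  closed Rf' -> Rf' `<=` K3 `*` K4 ->
  rcomp Rf' Rg = rcomp Rg' Rf ->
  {within K4, continuous u4} ->
  convex_set_rV K4 -> strictly_concave_on K4 u4 ->
  (forall y, K2 y -> is_max_over Rg' u4 y (u2 y)) ->
  (forall z, K3 z -> is_max_over Rf' u4 z (u3 z)) ->
  (forall x, K1 x -> unique_argmax Rf u2 x (f x)) ->
  (forall x, K1 x -> unique_argmax Rg u3 x (g x)) ->
  (forall y, K2 y -> unique_argmax Rg' u4 y (g' y)) ->
  (forall z, K3 z -> unique_argmax Rf' u4 z (f' z)) ->
  (forall x, K1 x ->
     [set w | K4 w /\ rcomp Rf' Rg (x, w)] !=set0 /\
     convex_set_rV [set w | K4 w /\ rcomp Rf' Rg (x, w)]) ->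
  forall x, K1 x -> f' (g x) = g' (f x).
Proof.
(* Closedness and continuity only guarantee that the maxima exist; here they
   are assumed outright. *)
move=> _ _ _ _ _ _ _ _ _ sRf _ sRg _ sRg' _ sRf' square _ _ concu4
  maxu2 maxu3 argf argg argg' argf' hW x K1x.
have [_ cvxW] := hW x K1x.
have [Rgx [maxg _]] := argg x K1x; have [_ K3g] := sRg _ Rgx.
have [Rfx [maxf _]] := argf x K1x; have [_ K2f] := sRf _ Rfx.
have [Rf'g [maxf' _]] := argf' _ K3g.
have [Rg'f [maxg' _]] := argg' _ K2f.
apply: (strictly_concave_argmax_unique _ cvxW concu4) => [w [] //|||w [_]|w [_]].
- by split; [have [] := sRf' _ Rf'g | exists (g x)].
- by split; [have [] := sRg' _ Rg'f | rewrite square; exists (f x)].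
- apply: (rcomp_argmax_le _ Rgx maxg maxf').
  by move=> z /sRg[_ K3z]; exact: maxu3.
- rewrite square; apply: (rcomp_argmax_le _ Rfx maxf maxg').
  by move=> y /sRf[_ K2y]; exact: maxu2.
Qed.
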